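(* Let $n\in\mathbb{N}$, $\delta\in(0,1]$ and $\varepsilon_0>0$ with $\varepsilon_0\le\log\left(\frac{n}{16\log(2/\delta)}\right)$. Let $C\sim\mathrm{Bin}(n-1,e^{-\varepsilon_0})$, conditionally on $C$ let $A\sim\mathrm{Bin}(C,1/2)$, and let $\Delta\sim\mathrm{Bern}\left(\frac{e^{\varepsilon_0}}{e^{\varepsilon_0}+1}\right)$ be independent of $(C,A)$. Let $P=(A+\Delta,\,C-A+1-\Delta)$ and $Q=(A+1-\Delta,\,C-A+\Delta)$. Then $P$ and $Q$ are $(\varepsilon,\delta)$-indistinguishable for $$\varepsilon=\log\left(1+\frac{e^{\varepsilon_0}-1}{e^{\varepsilon_0}+1}\left(\frac{8\sqrt{e^{\varepsilon_0}\log(4/\delta)}}{\sqrt{n}}+\frac{8e^{\varepsilon_0}}{n}\right)\right).$$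
   Context: Two random variables $P,Q$ on the same space are $(\varepsilon,\delta)$-indistinguishable if for every event $E$, $e^{-\varepsilon}(\Pr(Q\in E)-\delta)\le\Pr(P\in E)\le e^{\varepsilon}\Pr(Q\in E)+\delta$. $\mathrm{Bin}(m,p)$ is the binomial distribution and $\mathrm{Bern}(p)$ the Bernoulli distribution with bias $p$. *)

From HB Require Import structures.
From mathcomp Require Import all_boot all_order all_algebra.
From mathcomp Require Import all_classical all_reals all_analysis.
Set Implicit Arguments. Unset Strict Implicit. Unset Printing Implicit Defensive.
Import Order.TTheory GRing.Theory Num.Theory.
Local Open Scope ring_scope.

Definition indist (R : realType) (T : Type) (eps del : R)
  (PrP PrQ : pred T -> R) : Prop :=
  forall E : pred T,
    expR (- eps) * (PrQ E - del) <= PrP E /\ PrP E <= expR eps * PrQ E + del.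

Definition binom_pmf (R : realType) (m : nat) (p : R) (k : nat) : R :=
  ('C(m, k))%:R * p ^+ k * (1 - p) ^+ (m - k).

Definition bern_pmf (R : realType) (p : R) (d : nat) : R :=
  if d == 0%N then 1 - p else p.

(* Joint law: C ~ Bin(n-1, e^{-eps0}), A | C ~ Bin(C, 1/2),
   Delta ~ Bern(e^eps0/(e^eps0+1)) independent of (C, A).
   Probability that f (A, C, Delta) lies in E. *)
Definition law_ACD (R : realType) (n : nat) (eps0 : R)
  (f : nat -> nat -> nat -> nat * nat) (E : pred (nat * nat)) : R :=
  \sum_(c < n) \sum_(a < c.+1) \sum_(d < 2)
     binom_pmf n.-1 (expR (- eps0)) c * binom_pmf c (2^-1) a
     * bern_pmf (expR eps0 / (expR eps0 + 1)) d
     * (f a c d \in E)%:R.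

(* P = (A + Delta, C - A + 1 - Delta), Q = (A + 1 - Delta, C - A + Delta);
   note a <= c and d <= 1 on the support, so nat subtraction is exact. *)
Definition PrP (R : realType) (n : nat) (eps0 : R) (E : pred (nat * nat)) : R :=
  law_ACD n eps0 (fun a c d => (a + d, c - a + 1 - d))%N E.
Definition PrQ (R : realType) (n : nat) (eps0 : R) (E : pred (nat * nat)) : R :=
  law_ACD n eps0 (fun a c d => (a + 1 - d, c - a + d))%N E.

From HB Require Import structures.
From mathcomp Require Import all_boot all_order all_algebra.
From mathcomp Require Import all_classical all_reals all_analysis.
From mathcomp Require Import lra ring.
Import Order.TTheory GRing.Theory Num.Theory.
Set Implicit Arguments. Unset Strict Implicit. Unset Printing Implicit Defensive.
Local Open Scope ring_scope.

(* Conditionally on C = c, both laws live on the points (x, c+1-x); writing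
   e = e^eps0, b = e/(e+1) and B for the Bin(c, 1/2) pmf, the point x has mass
   b B(x-1) + (1-b) B(x) under P and (1-b) B(x-1) + b B(x) under Q.  Let K be the
   slack of the statement, so that e^eps = 1 + (e-1)/(e+1) K.
   1. Below the threshold x <= (K+1)/(K+2) (c+1), the ratio B(x-1)/B(x) = x/(c+1-x)
      is at most K+1, which bounds the P-mass by e^eps times the Q-mass.
   2. Beyond it, the indicator of an event is dominated by the exponential
      majorant exp(K/(K+2) (x - (K+1)/(K+2) (c+1))), giving
      P(E | C) <= e^eps Q(E | C) + E[tail | C]   (mix_split).
   3. A Chernoff computation, first over A and then over C, bounds the averaged tail
      by exp(alpha - 2 alpha^2 - (n-1) e^-eps0 alpha^2) with alpha = K/(2(K+2)),
      and the hypothesis on eps0 makes this at most delta (tail_le_del).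
   This gives P(E) <= e^eps Q(E) + delta; as Q is the mirror image of P under
   x |-> c+1-x, the same argument gives the symmetric bound, and lemma3p5 follows. *)

Section BinomialMixtures.
Variable R : realType.

Definition half_pmf (c a : nat) : R := binom_pmf c (2^-1) a.

Definition half_pmf_shift (c x : nat) : R :=
  if x is y.+1 then half_pmf c y else 0.

(* E[u h(A) + v h(A + 1)] for A ~ Bin(c, 1/2).  With u = 1 - v this is E[h(A + D)]
   for D ~ Bern(v) independent of A: the first coordinate of P (D = Delta) or of
   Q (D = 1 - Delta) given C = c. *)
Definition mix (u v : R) (c : nat) (h : nat -> R) : R :=
  \sum_(a < c.+1) half_pmf c a * (u * h a + v * h a.+1).

Definition bias (e : R) : R := e / (e + 1).

Lemma half_pmfE c a : half_pmf c a = 'C(c, a)%:R * 2^-1 ^+ c.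
Proof.
rewrite /half_pmf /binom_pmf.
have -> : 1 - 2^-1 = 2^-1 :> R by field.
case: (leqP a c) => hac; first by rewrite -mulrA -exprD subnKC.
by rewrite bin_small // !mul0r.
Qed.

Lemma half_pmf_ge0 c a : 0 <= half_pmf c a.
Proof. by rewrite half_pmfE mulr_ge0 // exprn_ge0 // invr_ge0. Qed.

Lemma half_pmf_shift_ge0 c x : 0 <= half_pmf_shift c x.
Proof. by case: x => [|x] //=; apply: half_pmf_ge0. Qed.

Lemma half_pmf_shift_ratio c x :
  half_pmf_shift c x * (c.+1%:R - x%:R) = x%:R * half_pmf c x.
Proof.
case: x => [|y] /=; first by rewrite !mul0r.
rewrite !half_pmfE; case: (leqP y c) => hyc.
  rewrite -natrB ?ltnS // subSS mulrAC -natrM mulnC -mul_bin_left natrM.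
  by rewrite mulrA.
by rewrite bin_small // bin_small ?mul0r ?mulr0 // ltnW.
Qed.

Lemma mix_pointwise u v c h :
  mix u v c h =
  \sum_(x < c.+2) (v * half_pmf_shift c x + u * half_pmf c x) * h x.
Proof.
under [RHS]eq_bigr do rewrite mulrDl.
rewrite big_split /= [X in X + _]big_ord_recl [X in _ + X]big_ord_recr /=.
rewrite [half_pmf c _]half_pmfE bin_small // !mulr0 !mul0r add0r mulr0 mul0r.
rewrite addr0 -big_split.
by rewrite /mix; apply: eq_bigr => a _; rewrite /bump add0n add1n /=; ring.
Qed.

(* Symmetry of Bin(c, 1/2): reflecting x to c+1-x swaps the roles of u and v. *)
Lemma mix_rev u v c h :
  mix u v c h = mix v u c (fun x => h (c.+1 - x)%N).
Proof.
rewrite /mix (reindex_inj rev_ord_inj) /=; apply: eq_bigr => i _.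
have hi : (i <= c)%N by rewrite -ltnS.
rewrite subSS -subSn // !half_pmfE bin_sub //; ring.
Qed.

(* P and Q as averages over C of the mixtures; since the two coordinates sum to
   C + 1, an event only matters through its section x |-> (x, c+1-x). *)
Lemma PrP_mix n eps0 E :
  PrP n eps0 E = \sum_(c < n) binom_pmf n.-1 (expR (- eps0)) c *
    mix (1 - bias (expR eps0)) (bias (expR eps0)) c
      (fun x => ((x, (c.+1 - x)%N) \in E)%:R).
Proof.
apply: eq_bigr => c _; rewrite /mix mulr_sumr; apply: eq_bigr => a _.
rewrite !big_ord_recl big_ord0 /= /bern_pmf /bump /=.
have ha : (a <= c)%N by rewrite -ltnS.
rewrite addn0 addn1 subn0 subn1 addn1 /= -subSn // subSS /half_pmf /bias; ring.
Qed.

Lemma PrQ_mix n eps0 E :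
  PrQ n eps0 E = \sum_(c < n) binom_pmf n.-1 (expR (- eps0)) c *
    mix (bias (expR eps0)) (1 - bias (expR eps0)) c
      (fun x => ((x, (c.+1 - x)%N) \in E)%:R).
Proof.
apply: eq_bigr => c _; rewrite /mix mulr_sumr; apply: eq_bigr => a _.
rewrite !big_ord_recl big_ord0 /= /bern_pmf /bump /=.
have ha : (a <= c)%N by rewrite -ltnS.
rewrite addn1 subn0 addn0 subn1 addn1 /= -subSn // subSS /half_pmf /bias; ring.
Qed.

End BinomialMixtures.

Section LikelihoodRatio.
Variable R : realType.

Definition eps_factor (e K : R) : R := 1 + (e - 1) / (e + 1) * K.

(* Points x <= thresh K (c+1) form the region where the likelihood ratio is
   controlled; beyond it we pay with the tail function. *)
Definition thresh (K : R) : R := (K + 1) / (K + 2).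

(* Exponential majorant of the indicator of the region beyond the threshold. *)
Definition tail_fn (K : R) (c x : nat) : R :=
  expR (K / (K + 2) * (x%:R - thresh K * c.+1%:R)).

Lemma shift_le_of_thresh K c x : 0 <= K ->
  x%:R <= thresh K * c.+1%:R -> half_pmf_shift R c x <= (K + 1) * half_pmf R c x.
Proof.
move=> hK; set m : R := c.+1%:R; set X : R := x%:R.
have hm : 0 < m by rewrite ltr0n.
have hK2 : 0 < K + 2 by lra.
rewrite /thresh mulrAC ler_pdivlMr // => hXm.
have hXK : X <= (K + 1) * (m - X).
  have -> : (K + 1) * (m - X) = (K + 1) * m - X * (K + 2) + X by ring.
  lra.
have hmX : 0 < m - X.
  have : X * (K + 2) < m * (K + 2).
    by apply: (le_lt_trans hXm); rewrite [m * _]mulrC ltr_pM2r //; lra.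
  by rewrite ltr_pM2r // subr_gt0.
rewrite -(ler_pM2r hmX) half_pmf_shift_ratio -/m -/X mulrAC (mulrC X).
by rewrite mulrC; apply: ler_wpM2r => //; apply: half_pmf_ge0.
Qed.

Lemma bias_ratio_le e K b0 b1 : 1 < e -> 0 <= K -> 0 <= b0 -> 0 <= b1 ->
  b0 <= (K + 1) * b1 ->
  bias e * b0 + (1 - bias e) * b1 <=
  eps_factor e K * ((1 - bias e) * b0 + bias e * b1).
Proof.
move=> he hK hb0 hb1 hb; set E := eps_factor e K.
have he1 : 0 < e + 1 by lra.
have hs : 0 <= (e - 1) / (e + 1) by rewrite divr_ge0 //; lra.
have hEe : 0 <= E * e - 1.
  have : 0 <= (e - 1) / (e + 1) * K * e by apply: mulr_ge0; [exact: mulr_ge0 | lra].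
  have -> : E * e - 1 = e - 1 + (e - 1) / (e + 1) * K * e.
    by rewrite /E /eps_factor; ring.
  lra.
have hcoef : (E - e) * (K + 1) + (E * e - 1) = (e - 1) / (e + 1) * K ^+ 2.
  by rewrite /E /eps_factor; field; lra.
have hcoef0 : 0 <= (e - 1) / (e + 1) * K ^+ 2 by rewrite mulr_ge0 ?sqr_ge0.
have key : 0 <= (K + 1) * ((E - e) * b0 + (E * e - 1) * b1).
  have -> : (K + 1) * ((E - e) * b0 + (E * e - 1) * b1) =
      ((E - e) * (K + 1) + (E * e - 1)) * b0 + (E * e - 1) * ((K + 1) * b1 - b0).
    by ring.
  by rewrite hcoef; apply: addr_ge0; apply: mulr_ge0 => //; rewrite subr_ge0.
rewrite pmulr_rge0 in key; last lra.
have -> : bias e * b0 + (1 - bias e) * b1 = (e * b0 + b1) / (e + 1).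
  by rewrite /bias; field; lra.
have -> : E * ((1 - bias e) * b0 + bias e * b1) = (E * b0 + E * e * b1) / (e + 1).
  by rewrite /bias; field; lra.
by apply: ler_wpM2r; rewrite ?invr_ge0; lra.
Qed.

Lemma eps_factor_ge1 (e K : R) : 1 < e -> 0 <= K -> 1 <= eps_factor e K.
Proof. by move=> he hK; rewrite lerDl mulr_ge0 ?divr_ge0 //; lra. Qed.

Lemma mix_split (e K : R) c h : 1 < e -> 0 <= K -> (forall x, 0 <= h x <= 1) ->
  mix (1 - bias e) (bias e) c h <=
  eps_factor e K * mix (bias e) (1 - bias e) c h +
  mix (1 - bias e) (bias e) c (tail_fn K c).
Proof.
move=> he hK hh; rewrite !mix_pointwise mulr_sumr -big_split /=.
apply: ler_sum => x _; set b := bias e.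
have hb : 0 <= b <= 1 by rewrite /b /bias divr_ge0 ?ler_pdivrMr /=; lra.
have hb0 := half_pmf_shift_ge0 R c x; have hb1 := half_pmf_ge0 R c x.
set massP := b * _ + _; set massQ := (1 - b) * _ + _.
have hP : 0 <= massP by apply: addr_ge0; apply: mulr_ge0 => //; lra.
have hQ : 0 <= massQ by apply: addr_ge0; apply: mulr_ge0 => //; lra.
have [hx0 hx1] := andP (hh x).
have htail0 : 0 <= tail_fn K c x by apply: expR_ge0.
have hE := eps_factor_ge1 he hK.
case: (lerP (x%:R) (thresh K * c.+1%:R)) => hx.
  have hratio : massP <= eps_factor e K * massQ.
    by apply: bias_ratio_le => //; apply: shift_le_of_thresh.
  have : massP * h x <= eps_factor e K * massQ * h x by apply: ler_wpM2r.
  have : 0 <= massP * tail_fn K c x by apply: mulr_ge0.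
  lra.
have htail1 : 1 <= tail_fn K c x.
  apply: le_trans (expR_ge1Dx _); rewrite lerDl mulr_ge0 ?divr_ge0 //; lra.
have : massP * h x <= massP * tail_fn K c x by apply: ler_wpM2l => //; lra.
have : 0 <= eps_factor e K * (massQ * h x) by rewrite !mulr_ge0 //; lra.
lra.
Qed.

Lemma avg_mix_split (e K : R) (w : nat -> R) N (G : nat -> nat -> R) :
  1 < e -> 0 <= K -> (forall c, 0 <= w c) -> (forall c x, 0 <= G c x <= 1) ->
  \sum_(c < N) w c * mix (1 - bias e) (bias e) c (G c) <=
  eps_factor e K * \sum_(c < N) w c * mix (bias e) (1 - bias e) c (G c) +
  \sum_(c < N) w c * mix (1 - bias e) (bias e) c (tail_fn K c).
Proof.
move=> he hK hw hG; rewrite mulr_sumr -big_split /=; apply: ler_sum => c _.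
by rewrite mulrCA -mulrDr ler_wpM2l // mix_split.
Qed.

End LikelihoodRatio.

Section ChernoffTail.
Variable R : realType.

(* alpha = K/(2(K+2)); the tilt K/(K+2) is 2 alpha and thresh K = 1/2 + alpha. *)
Definition half_tilt (K : R) : R := K / (2 * (K + 2)).

Lemma half_mgf c (z : R) :
  \sum_(a < c.+1) half_pmf R c a * z ^+ a = ((1 + z) / 2) ^+ c.
Proof.
rewrite exprMn addrC exprD1n mulrC mulr_sumr; apply: eq_bigr => a _.
by rewrite half_pmfE -mulr_natr; ring.
Qed.

(* Chernoff bound for the mixture: as exp is increasing, h(A) <= h(A+1), and the
   latter has an explicit expectation. *)
Lemma mix_exp_le (p lam r : R) c : 0 <= p <= 1 -> 0 <= lam ->
  mix (1 - p) p c (fun x => expR (lam * (x%:R - r))) <=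
  expR (lam * (1 - r)) * ((1 + expR lam) / 2) ^+ c.
Proof.
move=> /andP[hp0 hp1] hlam; rewrite -half_mgf mulr_sumr.
apply: ler_sum => a _; rewrite mulrCA; apply: ler_wpM2l; first exact: half_pmf_ge0.
have -> : expR (lam * (1 - r)) * expR lam ^+ a = expR (lam * (a.+1%:R - r)).
  by rewrite -expRM_natl -expRD -[a.+1]addn1 natrD; congr expR; ring.
have hmono : expR (lam * (a%:R - r)) <= expR (lam * (a.+1%:R - r)).
  by rewrite ler_expR ler_wpM2l // lerD2r ler_nat.
have : (1 - p) * expR (lam * (a%:R - r)) <= (1 - p) * expR (lam * (a.+1%:R - r)).
  by apply: ler_wpM2l; lra.
lra.
Qed.

Lemma expRN_le_inv (y : R) : 0 < 1 + y -> expR (- y) <= (1 + y)^-1.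
Proof.
by move=> hy; rewrite expRN lef_pV2 ?posrE ?expR_gt0 // expR_ge1Dx.
Qed.

(* The per-trial factor of the tilted mgf is at most 1 - alpha^2. *)
Lemma cosh_tilt_le (a : R) : 0 <= a -> a <= 2^-1 ->
  (expR (- (a + 2 * a ^+ 2)) + expR (a - 2 * a ^+ 2)) / 2 <= 1 - a ^+ 2.
Proof.
move=> ha0 ha1; set A := 1 + (a + 2 * a ^+ 2); set B := 1 - (a - 2 * a ^+ 2).
have hA : 0 < A by rewrite /A; nra.
have hB : 0 < B by rewrite /B; nra.
have h1 : expR (- (a + 2 * a ^+ 2)) <= A^-1 by apply: expRN_le_inv.
have h2 : expR (a - 2 * a ^+ 2) <= B^-1.
  by rewrite -[X in expR X]opprK expRN_le_inv // -/(B).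
suff : (A^-1 + B^-1) / 2 <= 1 - a ^+ 2 by lra.
have -> : (A^-1 + B^-1) / 2 = (A + B) / (2 * (A * B)) by field; lra.
rewrite ler_pdivrMr; last by rewrite !mulr_gt0.
have -> : (1 - a ^+ 2) * (2 * (A * B)) = (A + B) + 2 * a ^+ 4 * (1 - 4 * a ^+ 2).
  by rewrite /A /B; ring.
rewrite lerDl !mulr_ge0 ?exprn_ge0 //; nra.
Qed.

Lemma half_tilt_range (K : R) : 0 <= K -> 0 <= half_tilt K <= 2^-1.
Proof.
move=> hK; rewrite /half_tilt divr_ge0 /= ?ler_pdivrMr; lra.
Qed.

Lemma half_tilt_sqr_le1 (K : R) : 0 <= K -> 0 <= 1 - half_tilt K ^+ 2.
Proof.
move=> /half_tilt_range /andP[hal0 hal1].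
by rewrite subr_ge0 exprn_ile1 //; lra.
Qed.

Lemma tail_mix_le (K p : R) c : 0 <= K -> 0 <= p <= 1 ->
  mix (1 - p) p c (tail_fn K c) <=
  expR (half_tilt K - 2 * half_tilt K ^+ 2) * (1 - half_tilt K ^+ 2) ^+ c.
Proof.
move=> hK hp; set al := half_tilt K.
have /andP[hal0 hal1] := half_tilt_range hK.
have hK2 : K + 2 != 0 by rewrite gt_eqF //; lra.
have hlam : K / (K + 2) = 2 * al by rewrite /al /half_tilt; field.
have hthr : thresh K = 2^-1 + al by rewrite /al /half_tilt /thresh; field.
have hlam0 : 0 <= K / (K + 2) by rewrite hlam mulr_ge0.
have hmgf := mix_exp_le (thresh K * c.+1%:R) c hp hlam0.
apply: le_trans hmgf _.
have -> : expR (K / (K + 2) * (1 - thresh K * c.+1%:R)) =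
    expR (al - 2 * al ^+ 2) * expR (- (al + 2 * al ^+ 2)) ^+ c.
  by rewrite -expRM_natl -expRD hlam hthr -[c.+1]addn1 natrD; congr expR; field.
rewrite -mulrA; apply: ler_wpM2l; first exact: expR_ge0.
rewrite -exprMn; apply: lerXn2r; rewrite ?nnegrE.
- by rewrite mulr_ge0 ?divr_ge0 ?addr_ge0 ?expR_ge0.
- exact: half_tilt_sqr_le1.
have -> : expR (- (al + 2 * al ^+ 2)) * ((1 + expR (K / (K + 2))) / 2) =
    (expR (- (al + 2 * al ^+ 2)) + expR (al - 2 * al ^+ 2)) / 2.
  by rewrite hlam mulrA mulrDr mulr1 -expRD; congr ((_ + expR _) / 2); ring.
exact: cosh_tilt_le.
Qed.

Lemma binom_pmf_ge0 m (q : R) c : 0 <= q <= 1 -> 0 <= binom_pmf m q c.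
Proof.
by case/andP=> hq0 hq1; rewrite /binom_pmf !mulr_ge0 ?exprn_ge0 ?subr_ge0.
Qed.

Lemma binom_avg_pow_le (q s : R) m : 0 <= q <= 1 -> 0 <= s ->
  \sum_(c < m.+1) binom_pmf m q c * s ^+ c <= expR (m%:R * (q * (s - 1))).
Proof.
move=> /andP[hq0 hq1] hs.
have -> : \sum_(c < m.+1) binom_pmf m q c * s ^+ c = ((1 - q) + q * s) ^+ m.
  rewrite exprDn; apply: eq_bigr => c _.
  by rewrite /binom_pmf -mulr_natl exprMn; ring.
rewrite expRM_natl; apply: lerXn2r; rewrite ?nnegrE ?expR_ge0 //.
  by rewrite addr_ge0 ?mulr_ge0 //; lra.
by have := expR_ge1Dx (q * (s - 1)); lra.
Qed.

Lemma tail_avg_le (K p q : R) m : 0 <= K -> 0 <= p <= 1 -> 0 <= q <= 1 ->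
  \sum_(c < m.+1) binom_pmf m q c * mix (1 - p) p c (tail_fn K c) <=
  expR (half_tilt K - 2 * half_tilt K ^+ 2 - m%:R * q * half_tilt K ^+ 2).
Proof.
move=> hK hp hq; set al := half_tilt K.
apply: (@le_trans _ _ (\sum_(c < m.+1) binom_pmf m q c *
    (expR (al - 2 * al ^+ 2) * (1 - al ^+ 2) ^+ c))).
  apply: ler_sum => c _; rewrite ler_wpM2l ?binom_pmf_ge0 //.
  exact: tail_mix_le.
have -> : \sum_(c < m.+1) binom_pmf m q c *
    (expR (al - 2 * al ^+ 2) * (1 - al ^+ 2) ^+ c) =
    expR (al - 2 * al ^+ 2) * \sum_(c < m.+1) binom_pmf m q c * (1 - al ^+ 2) ^+ c.
  by rewrite mulr_sumr; apply: eq_bigr => c _; rewrite mulrCA.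
apply: le_trans (ler_wpM2l (expR_ge0 _)
  (binom_avg_pow_le m hq (half_tilt_sqr_le1 hK))) _.
rewrite -expRD; have -> : al - 2 * al ^+ 2 + m%:R * (q * (1 - al ^+ 2 - 1)) =
  al - 2 * al ^+ 2 - m%:R * q * al ^+ 2 by ring.
by [].
Qed.

End ChernoffTail.

Section ChernoffExponent.
Variable R : realType.

Lemma ln2_ge_half : 2^-1 <= ln (2 : R).
Proof.
have := @le_ln1Dx R (- 2^-1) ltac:(lra).
have -> : 1 + - 2^-1 = (2 : R)^-1 by field.
by rewrite lnV ?posrE //; lra.
Qed.

Lemma half_tilt_sqr_ge (X Y L a : R) : 0 <= X -> 0 < Y -> 4^-1 <= a ->
  X ^+ 2 = Y * L -> 16 * Y * (L - a) <= 1 ->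
  Y * (L - 2 * a + 4^-1) <= half_tilt (8 * X + 8 * Y) ^+ 2.
Proof.
move=> hX hY ha hXY hc; set al := half_tilt _; set w := X + Y.
have hw : 0 < w by rewrite /w; lra.
have hal : al = 2 * w / (4 * w + 1).
  by rewrite /al /half_tilt /w; field; apply/andP; split; lra.
have hal0 : 0 <= al by rewrite hal divr_ge0 //; lra.
case: (lerP 1 (4 * w)) => h4.
- have h1 : 4^-1 <= al by rewrite hal ler_pdivlMr; lra.
  have h2 : 16^-1 <= al ^+ 2.
    have -> : (16^-1 : R) = 4^-1 ^+ 2 by rewrite expr2; field.
    by apply: lerXn2r => //; rewrite nnegrE //; lra.
  have : Y * (L - 2 * a + 4^-1) <= Y * (L - a) by apply: ler_wpM2l; lra.
  lra.
- have h1 : X <= al.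
    rewrite hal ler_pdivlMr; last lra.
    have : 4 * w * X <= 1 * X by apply: ler_wpM2r => //; lra.
    rewrite /w in hw h4 *; lra.
  have h2 : X ^+ 2 <= al ^+ 2 by apply: lerXn2r; rewrite ?nnegrE.
  have : Y * (L - 2 * a + 4^-1) <= Y * L by apply: ler_wpM2l; lra.
  lra.
Qed.

(* Hence the Chernoff exponent is at most 2a - L; instantiated with a = ln 2,
   L = ln (4/del) this is ln del. *)
Lemma chernoff_exponent_le (X Y L a N : R) :
  0 <= X -> 0 < Y -> 4^-1 <= a -> X ^+ 2 = Y * L -> 16 * Y * (L - a) <= 1 ->
  Y^-1 - 1 <= N ->
  half_tilt (8 * X + 8 * Y) - 2 * half_tilt (8 * X + 8 * Y) ^+ 2 -
    N * half_tilt (8 * X + 8 * Y) ^+ 2 <= 2 * a - L.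
Proof.
move=> hX hY ha hXY hc hN; set al := half_tilt _.
have hkey := half_tilt_sqr_ge hX hY ha hXY hc; rewrite -/al in hkey.
have hsq : 0 <= al ^+ 2 by apply: sqr_ge0.
have hdiv : L - 2 * a + 4^-1 <= al ^+ 2 / Y by rewrite ler_pdivlMr // mulrC.
have hN2 : (Y^-1 - 1) * al ^+ 2 <= N * al ^+ 2 by apply: ler_wpM2r.
have h14 : al - al ^+ 2 <= 4^-1.
  have : 0 <= (al - 2^-1) ^+ 2 by apply: sqr_ge0.
  have -> : (al - 2^-1) ^+ 2 = 4^-1 - (al - al ^+ 2) by field.
  lra.
have : al ^+ 2 / Y = (Y^-1 - 1) * al ^+ 2 + al ^+ 2 by field; lra.
lra.
Qed.

Definition dp_slack (n : nat) (del eps0 : R) : R :=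
  8 * Num.sqrt (expR eps0 * ln (4 / del)) / Num.sqrt n%:R + 8 * expR eps0 / n%:R.

Lemma dp_slack_ge0 n (del eps0 : R) : 0 <= dp_slack n del eps0.
Proof.
by rewrite /dp_slack addr_ge0 // !mulr_ge0 ?divr_ge0 ?sqrtr_ge0 ?expR_ge0.
Qed.

Lemma budget_of_eps0 n (del eps0 : R) : 0 < del -> del <= 1 -> 0 < eps0 ->
  eps0 <= ln (n%:R / (16 * ln (2 / del))) ->
  (0 < n)%N /\ expR eps0 * (16 * ln (2 / del)) <= n%:R.
Proof.
move=> hdel hdel1 heps0 heps0n.
have hl : 0 < 16 * ln (2 / del).
  by rewrite mulr_gt0 // ln_gt0 // ltr_pdivlMr //; lra.
have hn : (0 < n)%N.
  by case: n heps0n => // h; rewrite mul0r ln0 // in h; lra.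
split => //; rewrite -ler_pdivlMr //.
have hz : 0 < n%:R / (16 * ln (2 / del)) by rewrite divr_gt0 ?ltr0n.
by rewrite -[X in _ <= X](lnK hz) ler_expR.
Qed.

Lemma tail_le_del m (del eps0 : R) : 0 < del -> del <= 1 -> 0 < eps0 ->
  expR eps0 * (16 * ln (2 / del)) <= m.+1%:R ->
  \sum_(c < m.+1) binom_pmf m (expR (- eps0)) c *
    mix (1 - bias (expR eps0)) (bias (expR eps0)) c
      (tail_fn (dp_slack m.+1 del eps0) c) <= del.
Proof.
move=> hdel hdel1 heps0 hbudget; set e := expR eps0; set L := ln (4 / del).
set X := Num.sqrt (e * L) / Num.sqrt m.+1%:R; set Y := e / m.+1%:R.
have he : 1 < e by rewrite expR_gt1.
have hm : (0 : R) < m.+1%:R by rewrite ltr0n.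
have hL : 0 <= L by rewrite ln_ge0 // ler_pdivlMr //; lra.
have hX : 0 <= X by rewrite divr_ge0 ?sqrtr_ge0.
have hY : 0 < Y by rewrite divr_gt0 //; lra.
have hK : dp_slack m.+1 del eps0 = 8 * X + 8 * Y by rewrite /dp_slack !mulrA.
have hL2 : ln (2 / del) = ln 2 - ln del by rewrite ln_div ?posrE.
have hL4 : L = 2 * ln 2 - ln del.
  by rewrite /L ln_div ?posrE // (_ : 4 = 2 * 2) ?lnM ?posrE //; lra.
have hp : 0 <= bias e <= 1 by rewrite /bias divr_ge0 ?ler_pdivrMr /=; lra.
have hq : 0 <= expR (- eps0) <= 1 by rewrite expR_ge0 expR_le1 /=; lra.
rewrite hK; apply: le_trans (tail_avg_le m _ hp hq) _; first lra.
rewrite -[X in _ <= X](lnK hdel) ler_expR.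
have -> : ln del = 2 * ln 2 - L by lra.
apply: chernoff_exponent_le => //.
- by have := ln2_ge_half; lra.
- rewrite /X /Y expr_div_n !sqr_sqrtr ?ler0n //; last by rewrite mulr_ge0 //; lra.
  by field; lra.
- have -> : L - ln 2 = ln (2 / del) by lra.
  have -> : 16 * Y * ln (2 / del) = e * (16 * ln (2 / del)) / m.+1%:R.
    by rewrite /Y; field; lra.
  by rewrite ler_pdivrMr // mul1r.
- have he1 : e^-1 <= 1 by rewrite invf_le1 //; lra.
  have -> : Y^-1 - 1 = m%:R * e^-1 + (e^-1 - 1).
    by rewrite /Y invf_div -addn1 natrD; field; lra.
  by rewrite expRN -/e; lra.
Qed.

End ChernoffExponent.

Lemma indist_of_one_sided (R : realType) (T : Type) (Eps del : R)
    (P Q : pred T -> R) : 0 < Eps ->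
  (forall E, P E <= Eps * Q E + del) -> (forall E, Q E <= Eps * P E + del) ->
  indist (ln Eps) del P Q.
Proof.
move=> hEps hPQ hQP E; rewrite expRN lnK //; split; last exact: hPQ.
by rewrite ler_pdivrMl // mulrC; have := hQP E; lra.
Qed.

Lemma indicator_unit (R : realType) (b : bool) : 0 <= (b%:R : R) <= 1.
Proof. by rewrite ler0n lern1 leq_b1. Qed.

Theorem lemma3p5 (R : realType) (n : nat) (del eps0 : R)
  (hdel : 0 < del) (hdel1 : del <= 1) (heps0 : 0 < eps0)
  (heps0n : eps0 <= ln (n%:R / (16 * ln (2 / del)))) :
  indist
    (ln (1 + (expR eps0 - 1) / (expR eps0 + 1) *
          (8 * Num.sqrt (expR eps0 * ln (4 / del)) / Num.sqrt n%:R
           + 8 * expR eps0 / n%:R)))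
    del (PrP n eps0) (PrQ n eps0).
Proof.
have [hn hbudget] := budget_of_eps0 hdel hdel1 heps0 heps0n.
case: n hn hbudget {heps0n} => [//|m] _ hbudget.
set e := expR eps0; set K := dp_slack m.+1 del eps0.
change (indist (ln (eps_factor e K)) del (PrP m.+1 eps0) (PrQ m.+1 eps0)).
have he : 1 < e by rewrite expR_gt1.
have hK : 0 <= K := dp_slack_ge0 m.+1 del eps0.
have hw c : 0 <= binom_pmf m (expR (- eps0)) c.
  by rewrite binom_pmf_ge0 // expR_ge0 expR_le1; lra.
have hsplit (G : nat -> nat -> R) : (forall c x, 0 <= G c x <= 1) ->
    \sum_(c < m.+1) binom_pmf m (expR (- eps0)) c * mix (1 - bias e) (bias e) c (G c) <=
    eps_factor e K *
      \sum_(c < m.+1) binom_pmf m (expR (- eps0)) c * mix (bias e) (1 - bias e) c (G c)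
    + del.
  move=> hG; apply: le_trans (avg_mix_split _ he hK hw hG) _.
  by rewrite lerD2l tail_le_del.
apply: indist_of_one_sided.
- exact: lt_le_trans ltr01 (eps_factor_ge1 he hK).
- move=> E; rewrite PrP_mix PrQ_mix.
  by apply: (hsplit (fun c x => ((x, (c.+1 - x)%N) \in E)%:R)) => c x;
    apply: indicator_unit.
(* Q is the mirror image of P: reflect each mixture by x |-> c + 1 - x *)
move=> E; rewrite PrP_mix PrQ_mix.
under eq_bigr do rewrite mix_rev.
under [X in _ <= _ * X + _]eq_bigr do rewrite mix_rev.
apply: (hsplit (fun c x => (((c.+1 - x)%N, (c.+1 - (c.+1 - x))%N) \in E)%:R)).
by move=> c x; apply: indicator_unit.
Qed.
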